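(* Let $p$ be an odd prime and $1\le\ell\le p-1$ with Legendre symbol $\left(\frac{8\ell+1}{p}\right)=-1$. Then for all $n\ge0$, $$b\big(4(pn+\ell)\big)\equiv 0\pmod 8.$$ Furthermore, for every odd prime $p$ and all $n,k\ge0$, $$b(4n)\equiv b\!\left(4p^{2k+2}n+\frac{p^{2k+2}-1}{2}\right)\pmod 8.$$
   Context: The mock theta function $\mathcal{B}(q)=\sum_{n\ge0}\frac{q^n(-q;q^2)_n}{(q;q^2)_{n+1}}=\sum_{n\ge0}b(n)q^n$, where $(a;q)_n=\prod_{j=0}^{n-1}(1-aq^j)$. *)

From mathcomp Require Import all_boot all_order all_algebra.
Set Implicit Arguments. Unset Strict Implicit. Unset Printing Implicit Defensive.
Import Order.TTheory GRing.Theory Num.Theory.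
Local Open Scope ring_scope.

Definition series := nat -> int.

Definition smul (f g : series) : series :=
  fun m => \sum_(i < m.+1) f i * g (m - i)%N.

Definition sone : series := fun m => ((m == 0)%N : nat)%:Z.

Definition smon (d : nat) : series := fun m => ((m == d) : nat)%:Z.

Definition onePlus (d : nat) : series :=
  fun m => ((m == 0)%N : nat)%:Z + ((m == d) : nat)%:Z.

(* 1 / (1 - q^d) = sum_i q^(d i), for d >= 1 *)
Definition geomInv (d : nat) : series := fun m => ((d %| m)%N : nat)%:Z.

Definition sprod (fs : seq series) : series := foldr smul sone fs.

(* (-q;q^2)_n = prod_{j<n} (1 + q^(2j+1)) *)
Definition pochNeg (n : nat) : series :=
  sprod [seq onePlus (2 * j).+1 | j <- iota 0 n].

(* 1 / (q;q^2)_(n+1) = prod_{j<=n} 1/(1 - q^(2j+1)) *)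
Definition invPoch (n : nat) : series :=
  sprod [seq geomInv (2 * j).+1 | j <- iota 0 n.+1].

(* the n-th summand  q^n (-q;q^2)_n / (q;q^2)_(n+1) *)
Definition Bterm (n : nat) : series :=
  smul (smon n) (smul (pochNeg n) (invPoch n)).

(* b(m) = coefficient of q^m in B(q); the summands with n > m are
   O(q^(m+1)) and thus do not contribute. *)
Definition b (m : nat) : int := \sum_(n < m.+1) Bterm n m.

Definition legendre (a : int) (p : nat) : int :=
  if (p%:Z %| a)%Z then 0
  else if [exists x : 'I_p, (p%:Z %| (x%:Z ^+ 2 - a))%Z] then 1 else -1.

(* Modulo X^K, the Fine-type recurrence for
     F(a) = sum_k (-q^a;q^2)_k / (q^(a+2);q^2)_k * q^(a k),
     F(a) = (1 + q^(2a)) / (1 - q^a)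
            + (1 + q^a)^2 q^(2a+2) / ((1 - q^a)(1 - q^(a+2))) * F(a+2),
   unfolds B(q) = F(1) / (1 - q) into
     B(q) = sum_n q^(2n^2+2n) (1 + q^(4n+2)) (-q;q^2)_n^2 / (q;q^2)_(n+1)^2.
   Modulo 8, ((1 + q^d) / (1 - q^d))^2 = 1 + 4 q^d / (1 - q^d)^2 and, for odd d,
   q^d / (1 - q^d)^2 has even coefficients at even exponents; so at q^(4m) the
   n-th summand is congruent to q^(2n^2+2n) (1 + q^(4n+2)) / (1 - q^(2n+1))^2,
   whose coefficient is 1 if 4m = 2n(n+1) and a multiple of 8 otherwise.
   Hence b(4m) is 1 or 0 mod 8 according as 8m+1 is a square or not. Both
   congruences follow: 8(pn+l)+1 = 8l+1 is a non-residue mod p, and multiplying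
   8n+1 by the odd square p^(2k+2) preserves being a square. *)

From mathcomp Require Import all_boot all_order all_algebra.
From mathcomp Require Import zify ring.
From Stdlib Require Import Setoid Morphisms.
Unset Printing Implicit Defensive.
Import Order.TTheory GRing.Theory Num.Theory.
Local Open Scope ring_scope.

Definition eqmodX {R : comNzRingType} (K : nat) (p q : {poly R}) :=
  forall i, (i < K)%N -> p`_i = q`_i.

Notation "p = q %[modX K ]" := (eqmodX K p q)
  (at level 70, q at next level, format "p  =  q  %[modX  K ]").

Lemma eqmodX_refl (R : comNzRingType) K : Reflexive (@eqmodX R K).
Proof. by []. Qed.

Lemma eqmodX_sym (R : comNzRingType) K : Symmetric (@eqmodX R K).
Proof. by move=> p q E i /E. Qed.

Lemma eqmodX_trans (R : comNzRingType) K : Transitive (@eqmodX R K).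
Proof. by move=> p q r E1 E2 i lt_iK; rewrite E1 ?E2. Qed.

Add Parametric Relation (R : comNzRingType) K : {poly R} (@eqmodX R K)
  reflexivity proved by (@eqmodX_refl R K)
  symmetry proved by (@eqmodX_sym R K)
  transitivity proved by (@eqmodX_trans R K) as eqmodX_rel.

Add Parametric Morphism (R : comNzRingType) K : (@GRing.add {poly R}) with signature
  @eqmodX R K ==> @eqmodX R K ==> @eqmodX R K as eqmodX_add.
Proof. by move=> p q E p' q' E' i lt_iK; rewrite !coefD E ?E'. Qed.

Add Parametric Morphism (R : comNzRingType) K : (@GRing.mul {poly R}) with signature
  @eqmodX R K ==> @eqmodX R K ==> @eqmodX R K as eqmodX_mul.
Proof.
move=> p q E p' q' E' i lt_iK; rewrite !coefM; apply: eq_bigr => j _.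
have le_ji : (j <= i)%N by rewrite -ltnS.
by rewrite E ?E' // (leq_ltn_trans _ lt_iK) ?leq_subr.
Qed.

Add Parametric Morphism (R : comNzRingType) K : (@GRing.natmul {poly R}) with signature
  @eqmodX R K ==> eq ==> @eqmodX R K as eqmodX_natmul.
Proof. by move=> p q E n i lt_iK; rewrite !coefMn E. Qed.

Section TruncatedPowerSeries.

Variable R : comNzRingType.
Implicit Types (p q : {poly R}) (K d : nat).

Lemma eqmodX_sum K I (r : seq I) (P : pred I) (F G : I -> {poly R}) :
  (forall i, P i -> F i = G i %[modX K]) ->
  \sum_(i <- r | P i) F i = \sum_(i <- r | P i) G i %[modX K].
Proof. by move=> E; elim/big_rec2: _ => // i x y /E -> ->. Qed.

Lemma eqmodX_eq K p q : p = q -> p = q %[modX K].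
Proof. by move->. Qed.

Lemma mulXn_eqmodX0 K n p : (K <= n)%N -> 'X^n * p = 0 %[modX K].
Proof. by move=> le_Kn i lt_iK; rewrite coefXnM coef0 (leq_trans lt_iK le_Kn). Qed.

(* Truncations of 1/(1 - X^d) and of its square 1/(1 - X^d)^2. *)
Definition geom K d : {poly R} := \poly_(i < K) ((d %| i)%N%:R).

Definition geom2_coef d i := ((d %| i) * (i %/ d).+1)%N.

Definition geom2 K d : {poly R} := \poly_(i < K) (geom2_coef d i)%:R.

Lemma geom_mul_1subXn K d : (0 < d)%N -> geom K d * (1 - 'X^d) = 1 %[modX K].
Proof.
move=> d_gt0 i lt_iK; rewrite mulrBr mulr1 coefB coefMXn coef1 !coef_poly lt_iK.
case: ltnP => [lt_id | le_di].
  by case: i lt_iK lt_id => [|i] _ lt_id; rewrite ?dvdn0 ?gtnNdvd ?subr0.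
rewrite (leq_ltn_trans (leq_subr _ _) lt_iK) (dvdn_subl le_di (dvdnn d)) subrr.
by case: i {lt_iK} le_di => //; rewrite leqNgt d_gt0.
Qed.

Lemma geom2_mul_1subXn K d : (0 < d)%N -> geom2 K d * (1 - 'X^d) = geom K d %[modX K].
Proof.
move=> d_gt0 i lt_iK; rewrite mulrBr mulr1 coefB coefMXn !coef_poly lt_iK /geom2_coef.
case: ltnP => [lt_id | le_di].
  by case: i lt_iK lt_id => [|i] _ lt_id; rewrite ?dvdn0 ?div0n ?gtnNdvd ?subr0.
rewrite (leq_ltn_trans (leq_subr _ _) lt_iK) (dvdn_subl le_di (dvdnn d)).
case: (boolP (d %| i)%N) => [/dvdnP[k def_i] | _]; last by rewrite !mul0n subrr.
case: k def_i => [|k] def_i; first by move: le_di; rewrite def_i leqNgt d_gt0.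
by rewrite def_i mulSn addKn -mulSn !mulnK // !mul1n -natrB // subSnn.
Qed.

Lemma geom_sqr K d : (0 < d)%N -> geom K d * geom K d = geom2 K d %[modX K].
Proof.
move=> d_gt0; transitivity (geom2 K d * (1 - 'X^d) * geom K d).
  by rewrite geom2_mul_1subXn.
rewrite (_ : _ * _ * _ = geom2 K d * (geom K d * (1 - 'X^d))); last by ring.
by rewrite geom_mul_1subXn // mulr1.
Qed.
Lemma eqmodX_divl K d p q : (0 < d)%N ->
  (1 - 'X^d) * p = q %[modX K] -> p = geom K d * q %[modX K].
Proof. by move=> d_gt0 <-; rewrite mulrA geom_mul_1subXn // mul1r. Qed.

Definition qterm K a b k : {poly R} :=
  \prod_(j < k) ((1 + 'X^(a + 2 * j)) * geom K (b + 2 * j)).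

Definition qsum K a b t : {poly R} := \sum_(k < K) qterm K a b k * 'X^(t * k).

Lemma qtermSl K a b k :
  qterm K a b k.+1 = (1 + 'X^a) * geom K b * qterm K (a + 2) (b + 2) k.
Proof.
rewrite /qterm big_ord_recl !muln0 !addn0; congr (_ * _); apply: eq_bigr => j _.
by rewrite /= mulnS !addnA.
Qed.

Lemma qtermSr K a b k :
  qterm K a b k.+1 = qterm K a b k * ((1 + 'X^(a + 2 * k)) * geom K (b + 2 * k)).
Proof. exact: big_ord_recr. Qed.

Lemma qsum_recl K a b t : (0 < t)%N ->
  qsum K a b t = 1 + 'X^t * ((1 + 'X^a) * geom K b) * qsum K (a + 2) (b + 2) t %[modX K].
Proof.
move=> t_gt0; case: K => [|K] //.
set c := (1 + 'X^a) * geom K.+1 b.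
rewrite /qsum big_ord_recl big_ord_recr mulrDr addrA /= -[X in X = _ %[modX _]]addr0.
apply: eqmodX_add.
  apply: eqmodX_eq; rewrite [qterm _ _ _ 0]big_ord0 mul1r muln0 expr0 mulr_sumr.
  congr (_ + _); apply: eq_bigr => k _.
  by rewrite /= /bump leq0n add1n qtermSl mulnS exprD -/c; ring.
rewrite (_ : _ * _ = 'X^(t * K.+1) * (c * qterm K.+1 (a + 2) (b + 2) K)).
  by symmetry; apply: mulXn_eqmodX0; rewrite leq_pmull.
by rewrite mulnS exprD; ring.
Qed.

Lemma qsum_mul_1subXn K a c t : (0 < t)%N ->
  (1 - 'X^t) * qsum K a (c + 2) t =
    (1 - 'X^c) + ('X^c + 'X^(a + t)) * qsum K a (c + 2) (t + 2) %[modX K].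
Proof.
move=> t_gt0; case: K => [|K] //.
set D := fun k => qterm K.+1 a (c + 2) k * 'X^(t * k).
have D_step k : D k.+1 * (1 - 'X^(c + 2 * k.+1)) =
                D k * 'X^t * (1 + 'X^(a + 2 * k)) %[modX K.+1].
  rewrite /D qtermSr (_ : c + 2 * k.+1 = c + 2 + 2 * k)%N; last by lia.
  rewrite (_ : _ * _ = D k * 'X^t * (1 + 'X^(a + 2 * k)) *
     (geom K.+1 (c + 2 + 2 * k) * (1 - 'X^(c + 2 + 2 * k)))).
    by rewrite geom_mul_1subXn ?mulr1 //; lia.
  by rewrite /D mulnS !exprD; ring.
have telescope : \sum_(k < K.+1) D k * (1 - 'X^(c + 2 * k)) =
    (1 - 'X^c) + \sum_(k < K.+1) D k * 'X^t * (1 + 'X^(a + 2 * k)) %[modX K.+1].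
  rewrite big_ord_recl big_ord_recr addrA -[X in X = _ %[modX _]]addr0.
  apply: eqmodX_add; last first.
    rewrite (_ : _ * _ = 'X^(t * K.+1) * (qterm K.+1 a (c + 2) K * (1 + 'X^(a + 2 * K)))).
      by symmetry; apply: mulXn_eqmodX0; rewrite leq_pmull.
    by rewrite /D mulnS !exprD; ring.
  apply: eqmodX_add.
    by rewrite /D [qterm _ _ _ 0]big_ord0 /= !muln0 addn0 mul1r mul1r.
  by apply: eqmodX_sum => k _; rewrite /= /bump leq0n add1n D_step.
set S1 := qsum K.+1 a (c + 2) t; set S2 := qsum K.+1 a (c + 2) (t + 2).
have S2E : S2 = \sum_(k < K.+1) D k * 'X^(2 * k).
  by apply: eq_bigr => k _; rewrite /D mulnDl exprD mulrA.
have lhsE : \sum_(k < K.+1) D k * (1 - 'X^(c + 2 * k)) = S1 - 'X^c * S2.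
  rewrite S2E /S1 /qsum mulr_sumr -sumrB; apply: eq_bigr => k _.
  by rewrite /D exprD; ring.
have rhsE : \sum_(k < K.+1) D k * 'X^t * (1 + 'X^(a + 2 * k)) = 'X^t * S1 + 'X^(a + t) * S2.
  rewrite S2E /S1 /qsum !mulr_sumr -big_split /=; apply: eq_bigr => k _.
  by rewrite /D !(exprD _ a); ring.
rewrite lhsE rhsE in telescope.
rewrite (_ : _ * S1 = (S1 - 'X^c * S2) + ('X^c * S2 - 'X^t * S1)); last by ring.
by rewrite telescope; apply: eqmodX_eq; ring.
Qed.

Lemma qsum_step K a b t : (0 < t)%N -> (0 < b)%N ->
  qsum K a b t = geom K t * (1 + 'X^(a + t)) +
    geom K t * geom K b * (1 + 'X^a) * ('X^b + 'X^(a + 2 + t)) * 'X^t *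
      qsum K (a + 2) (b + 2) (t + 2) %[modX K].
Proof.
move=> t_gt0 b_gt0.
rewrite qsum_recl // (eqmodX_divl _ _ _ _ t_gt0 (qsum_mul_1subXn K (a + 2) b t t_gt0)).
set Q := qsum K (a + 2) (b + 2) (t + 2).
set C := geom K t * geom K b * (1 + 'X^a) * ('X^b + 'X^(a + 2 + t)) * 'X^t * Q.
transitivity (1 + 'X^t * (1 + 'X^a) * geom K t * (geom K b * (1 - 'X^b)) + C).
  by apply: eqmodX_eq; rewrite /C; ring.
rewrite geom_mul_1subXn // mulr1.
transitivity (geom K t * (1 - 'X^t) + 'X^t * (1 + 'X^a) * geom K t + C).
  by rewrite geom_mul_1subXn.
by apply: eqmodX_eq; rewrite exprD; ring.
Qed.

Lemma sqr_1addXn_geom K d : (0 < d)%N ->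
  ((1 + 'X^d) * geom K d) ^+ 2 = 1 + ('X^d * geom2 K d) *+ 4 %[modX K].
Proof.
move=> d_gt0; set y := 'X^d * geom K d.
have geomE : geom K d = 1 + y %[modX K].
  transitivity (geom K d * (1 - 'X^d) + y); first by apply: eqmodX_eq; rewrite /y; ring.
  by rewrite geom_mul_1subXn.
rewrite (_ : (1 + 'X^d) * geom K d = geom K d + y); last by rewrite /y; ring.
rewrite expr2 geomE (_ : _ * _ = 1 + (y * (1 + y)) *+ 4); last by ring.
by rewrite -geomE /y -mulrA geom_sqr.
Qed.

Definition fsum K a := qsum K a (a + 2) a.

Lemma fsum_step K a : (0 < a)%N ->
  fsum K a = geom K a * (1 + 'X^(2 * a)) +
    geom K a * geom K (a + 2) * (1 + 'X^a) ^+ 2 * 'X^(2 * a + 2) * fsum K (a + 2) %[modX K].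
Proof.
move=> a_gt0; rewrite /fsum qsum_step ?addn_gt0 ?a_gt0 //.
rewrite (_ : 2 * a + 2 = a + 2 + a)%N ?mul2n -?addnn; last by lia.
by apply: eqmodX_eq; rewrite !exprD; ring.
Qed.

Definition poch_neg n : {poly R} := \prod_(j < n) (1 + 'X^(2 * j + 1)).

Definition poch_inv K n : {poly R} := \prod_(j < n) geom K (2 * j + 1).

Definition bterm K n : {poly R} := 'X^n * poch_neg n * poch_inv K n.+1.

Definition fterm K n : {poly R} :=
  'X^(2 * n * n.+1) * (1 + 'X^(4 * n + 2)) * poch_neg n ^+ 2 * poch_inv K n.+1 ^+ 2.

Lemma poch_negS n : poch_neg n.+1 = poch_neg n * (1 + 'X^(2 * n + 1)).
Proof. exact: big_ord_recr. Qed.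

Lemma poch_invS K n : poch_inv K n.+1 = poch_inv K n * geom K (2 * n + 1).
Proof. exact: big_ord_recr. Qed.

Lemma bterm_sum K : geom K 1 * fsum K 1 = \sum_(n < K) bterm K n.
Proof.
rewrite /fsum /qsum mulr_sumr; apply: eq_bigr => n _.
rewrite /bterm /qterm /poch_neg /poch_inv big_ord_recl big_split /= !muln0 mul1n.
rewrite (eq_bigr (fun j : 'I_n => 1 + 'X^(2 * j + 1))) => [|j _]; last by rewrite addnC.
rewrite (eq_bigr (fun j : 'I_n => geom K (2 * j.+1 + 1))) => [|j _]; last first.
  by congr (geom K _); lia.
ring.
Qed.

Lemma fsum_expansion_partial K M :
  geom K 1 * fsum K 1 = \sum_(n < M) fterm K n +
    'X^(2 * M * M.+1) * poch_neg M ^+ 2 * poch_inv K M * poch_inv K M.+1 *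
      fsum K (2 * M + 1) %[modX K].
Proof.
elim: M => [|M IH].
  by apply: eqmodX_eq; rewrite big_ord0 /poch_neg /poch_inv !big_ord0 big_ord1; ring.
rewrite IH fsum_step; last by rewrite addn1.
apply: eqmodX_eq; rewrite big_ord_recr /= -addrA; congr (_ + _).
rewrite /fterm !poch_negS !poch_invS (_ : 2 * M + 1 + 2 = 2 * M.+1 + 1)%N; last by lia.
rewrite (_ : 2 * M.+1 * M.+2 = 2 * M * M.+1 + (2 * (2 * M + 1) + 2))%N; last by lia.
rewrite (_ : 4 * M + 2 = 2 * (2 * M + 1))%N; last by lia.
by rewrite (exprD _ (2 * M * M.+1)); ring.
Qed.

Lemma fsum_expansion K : geom K 1 * fsum K 1 = \sum_(n < K) fterm K n %[modX K].
Proof.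
rewrite (fsum_expansion_partial K K) -[X in _ = X %[modX _]]addr0; apply: eqmodX_add => //.
by rewrite -!mulrA; apply: mulXn_eqmodX0; nia.
Qed.

End TruncatedPowerSeries.

Arguments geom {R}.
Arguments geom2 {R}.
Arguments fsum {R}.
Arguments poch_neg {R}.
Arguments poch_inv {R}.
Arguments bterm {R}.
Arguments fterm {R}.

Definition agree K (f : series) (p : {poly int}) := forall i, (i < K)%N -> f i = p`_i.

Lemma agree_smul K f g p q : agree K f p -> agree K g q -> agree K (smul f g) (p * q).
Proof.
move=> Ef Eg i lt_iK; rewrite coefM; apply: eq_bigr => j _.
have le_ji : (j <= i)%N by rewrite -ltnS.
by rewrite Ef ?Eg // (leq_ltn_trans _ lt_iK) ?leq_subr.
Qed.

Lemma agree_sprod K (f : nat -> series) (p : nat -> {poly int}) s :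
  (forall j, agree K (f j) (p j)) -> agree K (sprod [seq f j | j <- s]) (\prod_(j <- s) p j).
Proof.
move=> E; elim: s => [|j s IH]; last by rewrite big_cons; apply: agree_smul.
by move=> i _; rewrite big_nil coef1 /sone natz.
Qed.

Lemma agree_Bterm K n : agree K (Bterm n) (bterm K n).
Proof.
have prod_iota (F : nat -> {poly int}) m :
    \prod_(j <- iota 0 m) F j = \prod_(j < m) F j.
  by rewrite -(big_mkord xpredT) /index_iota subn0.
rewrite /Bterm /bterm -mulrA; apply: agree_smul.
  by move=> i _; rewrite /smon coefXn natz.
apply: agree_smul.
  rewrite (_ : poch_neg n = \prod_(j <- iota 0 n) (1 + 'X^((2 * j).+1))).
    by apply: agree_sprod => d i _; rewrite /onePlus coefD coef1 coefXn !natz.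
  by rewrite prod_iota; apply: eq_bigr => j _; rewrite addn1.
rewrite (_ : poch_inv K n.+1 = \prod_(j <- iota 0 n.+1) geom K (2 * j).+1).
  by apply: agree_sprod => d i lt_iK; rewrite /geomInv /geom coef_poly lt_iK natz.
by rewrite prod_iota; apply: eq_bigr => j _; rewrite addn1.
Qed.

Lemma b_fterm m : b m = (\sum_(n < m.+1) fterm m.+1 n)`_m.
Proof.
rewrite -fsum_expansion // bterm_sum coef_sum; apply: eq_bigr => n _.
exact: agree_Bterm.
Qed.

Definition parity_mod2 K (P : bool) (f : {poly int}) :=
  forall i, (i < K)%N -> odd i != P -> (2 %| f`_i)%Z.

Lemma parity_mod2D {K P f g} :
  parity_mod2 K P f -> parity_mod2 K P g -> parity_mod2 K P (f + g).
Proof. by move=> Hf Hg i lt_iK odd_i; rewrite coefD rpredD ?Hf ?Hg. Qed.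

Lemma parity_mod2M {K P Q f g} :
  parity_mod2 K P f -> parity_mod2 K Q g -> parity_mod2 K (P (+) Q) (f * g).
Proof.
move=> Hf Hg i lt_iK odd_i; rewrite coefM rpred_sum // => j _.
have le_ji : (j <= i)%N by rewrite -ltnS.
have lt_jK : (j < K)%N := leq_ltn_trans le_ji lt_iK.
have [Pj | nPj] := eqVneq (odd j) P; last by rewrite dvdz_mulr ?Hf.
rewrite dvdz_mull ?Hg ?(leq_ltn_trans (leq_subr _ _)) // oddB // Pj.
by move: odd_i; case: (odd i); case: (P); case: (Q).
Qed.

Lemma parity_mod2_Xn K e : parity_mod2 K (odd e) 'X^e.
Proof.
move=> i _ odd_i; rewrite coefXn; case: eqP => [i_e | _]; last exact: dvdz0.
by rewrite i_e eqxx in odd_i.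
Qed.

Lemma parity_mod2_1addXn K e : ~~ odd e -> parity_mod2 K false (1 + 'X^e).
Proof.
move=> /negPf e_even; rewrite -(expr0 'X); apply: parity_mod2D.
  exact: (parity_mod2_Xn K 0).
by have := parity_mod2_Xn K e; rewrite e_even.
Qed.

Lemma parity_mod2_mul2n K P f : parity_mod2 K P (f *+ 2).
Proof. by move=> i _ _; apply/dvdzP; exists f`_i; rewrite coefMn mulr_natr. Qed.

Lemma coef_geom2 K d i : (i < K)%N -> (geom2 K d)`_i = (geom2_coef d i)%:Z :> int.
Proof. by move=> lt_iK; rewrite coef_poly lt_iK; apply: natz. Qed.

Lemma parity_mod2_geom2 K d : odd d -> parity_mod2 K false (geom2 K d).
Proof.
move=> odd_d i lt_iK; rewrite coef_geom2 // /geom2_coef.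
have [/dvdnP[k ->] | _] := boolP (d %| i)%N; last by rewrite mul0n.
rewrite mulnK ?odd_gt0 // mul1n dvdzE /= dvdn2 /= oddM odd_d andbT.
by case: (odd k).
Qed.

Lemma poch_sqr_mod8 K n : exists2 Z, parity_mod2 K true Z &
  poch_neg n ^+ 2 * poch_inv K n ^+ 2 = 1 + Z *+ 4 %[modX K].
Proof.
elim: n => [|n [Z oddZ IH]].
  exists 0 => [i _ _|]; first by rewrite coef0 dvdz0.
  by apply: eqmodX_eq; rewrite /poch_neg /poch_inv !big_ord0 mul0rn; ring.
set d := (2 * n + 1)%N; have odd_d : odd d by rewrite /d oddD oddM.
pose Y : {poly int} := 'X^d * geom2 K d.
exists (Z + Y + (Z * Y) *+ 4).
  apply: parity_mod2D; last by rewrite (mulrnA _ 2 2); apply: parity_mod2_mul2n.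
  apply: parity_mod2D => //.
  by have := parity_mod2M (parity_mod2_Xn K d) (parity_mod2_geom2 K d odd_d); rewrite odd_d.
rewrite poch_negS poch_invS -/d.
rewrite (_ : _ * _ = poch_neg n ^+ 2 * poch_inv K n ^+ 2 * ((1 + 'X^d) * geom K d) ^+ 2).
  by rewrite IH sqr_1addXn_geom ?odd_gt0 //; apply: eqmodX_eq; rewrite /Y; ring.
by ring.
Qed.

Lemma four_dvd_quot n m k : (k * (2 * n + 1) + 2 * n * n.+1 = 4 * m)%N -> (4 %| k)%N.
Proof.
move=> def_4m.
have four_dvd_tri : (4 %| 2 * n * n.+1)%N.
  by rewrite -mulnA (_ : 4 = 2 * 2)%N // dvdn_pmul2l // dvdn2 oddM /= andbN.
have : (4 %| k * (2 * n + 1))%N by rewrite -(dvdn_addl _ four_dvd_tri) def_4m dvdn_mulr.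
by rewrite Gauss_dvdl // (_ : 4 = 2 ^ 2)%N // coprime_pexpl // coprime2n oddD oddM.
Qed.

Lemma geom2_coef_window n m (d := (2 * n + 1)%N) (e := (2 * n * n.+1)%N) :
  ((if 4 * m < e then 0 else geom2_coef d (4 * m - e)) +
   (if 4 * m < e + 2 * d then 0 else geom2_coef d (4 * m - e - 2 * d)) =
   (4 * m == e) %[mod 8])%N.
Proof.
have d_gt0 : (0 < d)%N by rewrite /d addn1.
have [lt_4m_e | le_e_4m] := ltnP (4 * m) e.
  by rewrite (ltn_addr _ lt_4m_e) (ltn_eqF lt_4m_e).
rewrite /geom2_coef.
have [/dvdnP[k def_k] | ndvd] := boolP (d %| 4 * m - e)%N; last first.
  have -> : (4 * m == e)%N = false.
    by apply: contraNF ndvd => /eqP ->; rewrite subnn dvdn0.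
  rewrite mul0n add0n; case: ltnP => // le_2d.
  by rewrite dvdn_subl ?(negPf ndvd) ?dvdn_mull //; lia.
have def_4m : (k * d + e = 4 * m)%N by rewrite -def_k subnK.
have /dvdnP[[|a] def_a] := four_dvd_quot n m k def_4m.
  rewrite def_a mul0n in def_k.
  rewrite def_k div0n (_ : 4 * m = e)%N ?eqxx; last by lia.
  by rewrite (_ : e < e + 2 * d)%N //; lia.
have -> : (4 * m == e)%N = false by apply/eqP; nia.
rewrite (_ : 4 * m < e + 2 * d = false)%N; last by apply/negbTE; rewrite -leqNgt; nia.
rewrite -subnDA (_ : 4 * m - (e + 2 * d) = (k - 2) * d)%N; last by rewrite mulnBl; lia.
rewrite def_k !mulnK // dvdn_mull // (_ : _ + _ = 8 * a.+1)%N ?modnMr //.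
by rewrite def_a; lia.
Qed.

Lemma coef_Xn_geom2 K a d j : (j < K)%N ->
  ('X^a * geom2 K d)`_j = (if (j < a)%N then 0%N else geom2_coef d (j - a))%:Z :> int.
Proof.
move=> lt_jK; rewrite coefXnM; case: ltnP => // _.
by rewrite coef_geom2 // (leq_ltn_trans (leq_subr _ _)).
Qed.

Lemma fterm_coef_mod8 K n m : (4 * m < K)%N ->
  ((fterm K n)`_(4 * m) = (4 * m == 2 * n * n.+1)%N %[mod 8])%Z.
Proof.
move=> lt_4m_K; set d := (2 * n + 1)%N; set e := (2 * n * n.+1)%N.
have odd_d : odd d by rewrite /d oddD oddM.
have [Z oddZ EZ] := poch_sqr_mod8 K n.
pose W : {poly int} := 'X^e * (1 + 'X^(2 * d)) * geom2 K d.
have fterm_eq : fterm K n = W + (W * Z) *+ 4 %[modX K].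
  rewrite /fterm poch_invS -/d -/e (_ : 4 * n + 2 = 2 * d)%N; last by lia.
  rewrite (_ : _ * _ = 'X^e * (1 + 'X^(2 * d)) * (poch_neg n ^+ 2 * poch_inv K n ^+ 2) *
                       (geom K d * geom K d)); last by ring.
  by rewrite EZ geom_sqr ?odd_gt0 //; apply: eqmodX_eq; rewrite /W; ring.
have W_even : parity_mod2 K false W.
  have Xe : parity_mod2 K false 'X^e.
    by have := parity_mod2_Xn K e; rewrite /e -mulnA oddM.
  have twod_even : ~~ odd (2 * d) by rewrite oddM.
  exact (parity_mod2M (parity_mod2M Xe (parity_mod2_1addXn K _ twod_even))
                      (parity_mod2_geom2 K d odd_d)).
rewrite fterm_eq // coefD coefMn.
have /dvdzP[t ->] : (2 %| (W * Z)`_(4 * m))%Z.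
  by apply: (parity_mod2M W_even oddZ) => //; rewrite oddM.
rewrite (_ : W = 'X^e * geom2 K d + 'X^(e + 2 * d) * geom2 K d); last by rewrite /W exprD; ring.
rewrite coefD !coef_Xn_geom2 // -PoszD (_ : t * 2 *+ 4 = t * 8); last by ring.
by rewrite addrC modzMDl !modz_nat subnDA geom2_coef_window.
Qed.

Definition is_square (x : nat) : bool := [exists s : 'I_x.+1, s * s == x]%N.

Lemma is_squareP x : reflect (exists s, s * s = x)%N (is_square x).
Proof.
apply: (iffP existsP) => [[s /eqP <-] | [s sqr_s]]; first by exists s.
have lt_s_x1 : (s < x.+1)%N by rewrite ltnS -sqr_s; case: s {sqr_s} => // s; rewrite leq_pmulr.
by exists (Ordinal lt_s_x1); apply/eqP.
Qed.

Lemma count_tri_is_square m :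
  \sum_(n < (4 * m).+1) ((4 * m == 2 * n * n.+1)%N : int) = is_square (8 * m + 1) :> int.
Proof.
have tri_inj : injective (fun n => 2 * n * n.+1)%N.
  by move=> n k tri_eq; case: (ltngtP n k) => // lt_nk; exfalso; nia.
case: is_squareP => [[s sqr_s] | no_sqr]; last first.
  rewrite big1 // => n _; case: eqP => // tri_n; case: no_sqr.
  by exists (2 * n + 1)%N; nia.
have odd_s : odd s by rewrite -(andbb (odd s)) -oddM sqr_s oddD oddM.
have def_s : s = (2 * s./2 + 1)%N by rewrite -{1}(odd_double_half s) odd_s addnC -mul2n.
set n := s./2 in def_s; have tri_n : (4 * m = 2 * n * n.+1)%N by nia.
have lt_n : (n < (4 * m).+1)%N by nia.
rewrite (bigD1 (Ordinal lt_n)) //= (introT eqP tri_n) big1 ?addr0 // => i ne_i.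
case: eqP => // tri_i; case/eqP: ne_i; apply: val_inj; apply: tri_inj.
by rewrite /= -tri_i.
Qed.

Lemma b_mul4_mod8 m : (b (4 * m) = is_square (8 * m + 1) %[mod 8])%Z.
Proof.
apply/eqP; rewrite -count_tri_is_square b_fterm coef_sum eqz_mod_dvd -sumrB rpred_sum // => n _.
by rewrite -eqz_mod_dvd; apply/eqP; apply: fterm_coef_mod8.
Qed.

Lemma legendre_sqr_neqN1 a p s : (0 < p)%N -> (s * s = a %[mod p])%N ->
  legendre a%:Z p != -1.
Proof.
move=> p_gt0 sqr_s; rewrite /legendre; case: ifP => // _.
case: existsP => // -[]; exists (Ordinal (ltn_pmod s p_gt0)).
rewrite -eqz_mod_dvd /= -!natz -natrX !natz !modz_nat.
by rewrite modnXm expnS expn1 sqr_s.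
Qed.

Lemma is_square_mulsqr q x : (0 < q)%N -> is_square (q * q * x) = is_square x.
Proof.
move=> q_gt0; apply/is_squareP/is_squareP => [[t sqr_t] | [s <-]]; last first.
  by exists (q * s)%N; rewrite mulnACA.
have : (q ^ 2 %| t ^ 2)%N by rewrite -!mulnn sqr_t dvdn_mulr.
rewrite dvdn_pexp2r // => /dvdnP[u def_t]; exists u.
have qq_gt0 : (0 < q * q)%N by rewrite muln_gt0 q_gt0.
by apply/eqP; rewrite -(eqn_pmul2l qq_gt0) -sqr_t def_t mulnACA mulnC.
Qed.

Lemma odd_sqr_8k1 q : odd q -> exists c, (q * q = 8 * c + 1)%N.
Proof.
move=> odd_q; have def_q : q = (2 * q./2 + 1)%N.
  by rewrite -{1}(odd_double_half q) odd_q addnC -mul2n.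
have /dvdnP[c def_c] : (2 %| q./2 * q./2.+1)%N by rewrite dvdn2 oddM /= andbN.
by exists c; rewrite def_q; nia.
Qed.

Theorem theorem1p7 (p : nat) (hp : prime p) (hodd : odd p) :
  (forall l : nat, (1 <= l)%N -> (l <= p - 1)%N ->
     legendre (8 * l + 1)%N%:Z p = -1 ->
     forall n : nat, (b (4 * (p * n + l)) = 0 %[mod 8])%Z)
  /\
  (forall n k : nat,
     (b (4 * n) = b (4 * p ^ (2 * k + 2) * n + (p ^ (2 * k + 2) - 1) %/ 2)
        %[mod 8])%Z).
Proof.
have p_gt0 := prime_gt0 hp.
split=> [l _ _ leg_m1 n | n k].
  rewrite b_mul4_mod8; case: is_squareP => // -[s sqr_s].
  suff : (s * s = 8 * l + 1 %[mod p])%N by move/(legendre_sqr_neqN1 _ _ _ p_gt0); rewrite leg_m1.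
  by rewrite sqr_s (_ : _ + 1 = 8 * n * p + (8 * l + 1))%N ?modnMDl //; lia.
set q := (p ^ k.+1)%N; have odd_q : odd q by rewrite oddX hodd orbT.
have [c sqr_q] := odd_sqr_8k1 q odd_q.
have -> : (p ^ (2 * k + 2) = q * q)%N by rewrite -expnD; congr expn; lia.
have -> : (4 * (q * q) * n + (q * q - 1) %/ 2 = 4 * (q * q * n + c))%N.
  by rewrite sqr_q addnK (_ : 8 * c = 4 * c * 2)%N ?mulnK; lia.
rewrite !b_mul4_mod8 (_ : 8 * (q * q * n + c) + 1 = q * q * (8 * n + 1))%N; last by nia.
by rewrite is_square_mulsqr // expn_gt0 p_gt0.
Qed.
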